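(* Let $F$ be an algebraically closed field of characteristic zero and let $A$, $B$ be finite dimensional algebras with Wedderburn–Malcev decompositions $A\cong A_1\times\cdots\times A_q\oplus J(A)$ and $B\cong B_1\times\cdots\times B_r\oplus J(B)$ ($A_i,B_j$ simple). Suppose $A_1\times\cdots\times A_k\cong B_1\times\cdots\times B_k\cong U$. Then $A\times B$ is PI-equivalent to an algebra $C$ which, as a vector space, is $C=U\times A_{k+1}\times\cdots\times A_q\times B_{k+1}\times\cdots\times B_r\oplus J(A)\oplus J(B)$; namely $C$ is the subalgebra of $A\times B$ consisting of all pairs $(u+a+j_A,\ \varphi(u)+b+j_B)$ with $u\in A_1\times\cdots\times A_k$, $a\in A_{k+1}\times\cdots\times A_q$, $j_A\in J(A)$, $b\in B_{k+1}\times\cdots\times B_r$, $j_B\in J(B)$, where $\varphi:A_1\times\cdots\times A_k\to B_1\times\cdots\times B_k$ is a fixed isomorphism.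
   Context: PI-equivalent means having the same $T$-ideal of polynomial identities. $J(\cdot)$ denotes the Jacobson radical. *)

From HB Require Import structures.
From mathcomp Require Import all_boot all_order all_algebra.
Set Implicit Arguments.
Unset Strict Implicit.
Unset Printing Implicit Defensive.
Import GRing.Theory.
Local Open Scope ring_scope.

Record nalg (F : fieldType) := NAlg {
  nalg_car :> vectType F;
  nmul : nalg_car -> nalg_car -> nalg_car;
  nmulA : forall x y z, nmul x (nmul y z) = nmul (nmul x y) z;
  nmulDl : forall x y z, nmul (x + y) z = nmul x z + nmul y z;
  nmulDr : forall x y z, nmul x (y + z) = nmul x y + nmul x z;
  nmulZl : forall (a : F) x y, nmul (a *: x) y = a *: nmul x y;
  nmulZr : forall (a : F) x y, nmul x (a *: y) = a *: nmul x y
}.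
Arguments nmul {F A} x y : rename.

Section Product.
Variables (F : fieldType) (A B : nalg F).
Definition pmul (x y : (A * B)%type) : (A * B)%type :=
  (nmul x.1 y.1, nmul x.2 y.2).
Fact pmulA x y z : pmul x (pmul y z) = pmul (pmul x y) z.
Proof. by rewrite /pmul /= !nmulA. Qed.
Fact pmulDl x y z : pmul (x + y) z = pmul x z + pmul y z.
Proof. by rewrite /pmul /= !nmulDl. Qed.
Fact pmulDr x y z : pmul x (y + z) = pmul x y + pmul x z.
Proof. by rewrite /pmul /= !nmulDr. Qed.
Fact pmulZl (a : F) x y : pmul (a *: x) y = a *: pmul x y.
Proof. by rewrite /pmul /= !nmulZl. Qed.
Fact pmulZr (a : F) x y : pmul x (a *: y) = a *: pmul x y.
Proof. by rewrite /pmul /= !nmulZr. Qed.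
Definition prod_nalg : nalg F :=
  @NAlg F (A * B)%type pmul pmulA pmulDl pmulDr pmulZl pmulZr.
End Product.

(* Noncommutative polynomials without constant term (elements of the free
   non-unital algebra F<X>, X = {x_0, x_1, ...}), as finite formal sums of
   monomials c * x_i * x_{w_1} * ... * x_{w_m}. *)
Definition ncpoly (F : fieldType) := seq (F * (nat * seq nat)).

Section Eval.
Variables (F : fieldType) (A : nalg F).
Definition weval (e : nat -> A) (i : nat) (w : seq nat) : A :=
  foldl (fun acc j => nmul acc (e j)) (e i) w.
Definition peval (e : nat -> A) (f : ncpoly F) : A :=
  \sum_(m <- f) m.1 *: weval e m.2.1 m.2.2.

Definition is_PI (f : ncpoly F) : Prop := forall e : nat -> A, peval e f = 0.
(* f vanishes on all evaluations in the subset P of A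
   (= f is an identity of the subalgebra P, when P is one) *)
Definition is_PI_on (P : A -> Prop) (f : ncpoly F) : Prop :=
  forall e : nat -> A, (forall i, P (e i)) -> peval e f = 0.

(* Jacobson radical of a (possibly non-unital) algebra: a is in J(A) iff
   1 - r a is left invertible in the unitalization A^# = F + A for every
   r = l + r' in A^#, i.e. l a + r' a is left quasi-regular. *)
Definition lqr (y : A) : Prop := exists z : A, z + y - nmul z y = 0.
Definition in_jacobson (a : A) : Prop :=
  forall (l : F) (r : A), lqr (l *: a + nmul r a).

Definition subalg (S : {vspace A}) : Prop :=
  forall x y, x \in S -> y \in S -> nmul x y \in S.

Definition simple_subalg (S : {vspace A}) : Prop :=
  [/\ subalg S,
      exists x y, [/\ x \in S, y \in S & nmul x y != 0]
    & forall I : {vspace A}, (I <= S)%VS ->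
        (forall x y, x \in S -> y \in I -> nmul x y \in I /\ nmul y x \in I) ->
        I = 0%VS \/ I = S].

Definition WM_decomp (q : nat) (As : 'I_q -> {vspace A}) (J : {vspace A}) : Prop :=
  [/\ forall i, simple_subalg (As i),
      forall i j, i != j -> forall x y, x \in As i -> y \in As j -> nmul x y = 0,
      forall x, x \in J <-> in_jacobson x,
      (\sum_(i < q) As i + J)%VS = fullv
    & directv (\sum_(i < q) As i + J)].
End Eval.

(* The subset C is a subalgebra because the simple components multiply
   blockwise (A_i A_j = 0 for i <> j) and J(A), J(B) are two-sided ideals, so
   a product in C is again "diagonal on U" up to radical terms.  For the PI
   equivalence, C sits inside A x B and both coordinate projections map C
   onto A and onto B; since evaluations in A x B are computed coordinatewise,
   an identity of C lifts to identities of A and of B, hence of A x B. *)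
From HB Require Import structures.
From mathcomp Require Import all_boot all_order all_algebra.
From Stdlib Require Import FunctionalExtensionality ClassicalEpsilon.
Set Implicit Arguments.
Unset Strict Implicit.
Unset Printing Implicit Defensive.
Import GRing.Theory.
Local Open Scope ring_scope.

Section NalgTheory.
Variables (F : fieldType) (A : nalg F).

Lemma nmul0l (y : A) : nmul 0 y = 0.
Proof. by have := nmulZl 0 0 y; rewrite !scale0r. Qed.

Lemma nmul0r (y : A) : nmul y 0 = 0.
Proof. by have := nmulZr 0 y 0; rewrite !scale0r. Qed.

Lemma nmulNl (x y : A) : nmul (- x) y = - nmul x y.
Proof. by rewrite -scaleN1r nmulZl scaleN1r. Qed.

Lemma nmulNr (x y : A) : nmul x (- y) = - nmul x y.
Proof. by rewrite -scaleN1r nmulZr scaleN1r. Qed.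

Lemma nmul_suml I (s : seq I) (P : pred I) (f : I -> A) y :
  nmul (\sum_(i <- s | P i) f i) y = \sum_(i <- s | P i) nmul (f i) y.
Proof. by elim/big_rec2: _ => [|i a b _ <-]; rewrite ?nmul0l ?nmulDl. Qed.

Lemma nmul_sumr I (s : seq I) (P : pred I) (f : I -> A) y :
  nmul y (\sum_(i <- s | P i) f i) = \sum_(i <- s | P i) nmul y (f i).
Proof. by elim/big_rec2: _ => [|i a b _ <-]; rewrite ?nmul0r ?nmulDr. Qed.

End NalgTheory.

Section OrthogonalSubalgebras.
Variables (F : fieldType) (A : nalg F) (n : nat) (As : 'I_n -> {vspace A}).
Hypothesis subalg_As : forall i, subalg (As i).
Hypothesis As_orth :
  forall i j, i != j -> forall x y, x \in As i -> y \in As j -> nmul x y = 0.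

Lemma nmul_sumv_disjoint (P Q : pred 'I_n) x y :
  (forall i, P i -> ~~ Q i) ->
  x \in (\sum_(i | P i) As i)%VS -> y \in (\sum_(i | Q i) As i)%VS ->
  nmul x y = 0.
Proof.
move=> PnQ /memv_sumP[v vP ->] /memv_sumP[w wQ ->].
rewrite nmul_suml big1 // => i Pi; rewrite nmul_sumr big1 // => j Qj.
have neq_ij : i != j by apply: contraNneq (PnQ i Pi) => ->.
exact: (As_orth neq_ij (vP i Pi) (wQ j Qj)).
Qed.

Lemma subalg_sumv (P : pred 'I_n) : subalg (\sum_(i | P i) As i)%VS.
Proof.
move=> _ _ /memv_sumP[v vP ->] /memv_sumP[w wP ->].
rewrite nmul_suml; apply: memv_suml => i Pi; rewrite nmul_sumr.
apply: memv_suml => j Pj; have [<-|neq_ij] := eqVneq i j.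
  apply: (subvP (sumv_sup i Pi (subvv _))).
  exact: subalg_As (vP i Pi) (wP i Pi).
by rewrite (As_orth neq_ij (vP i Pi) (wP j Pj)) mem0v.
Qed.

End OrthogonalSubalgebras.

Section JacobsonIdeal.
Variables (F : fieldType) (A : nalg F) (J : {vspace A}).
Hypothesis memJ : forall x, x \in J <-> in_jacobson x.

Lemma jacobson_mull (x j : A) : j \in J -> nmul x j \in J.
Proof.
move=> /memJ Jj; apply/memJ => l r.
have := Jj 0 (l *: x + nmul r x).
by rewrite scale0r add0r nmulDl nmulZl nmulA.
Qed.

(* If z is a quasi-inverse of x w, then - w x + w z x is one of w x. *)
Lemma lqr_mulC (x w : A) : lqr (nmul x w) -> lqr (nmul w x).
Proof.
move=> [z zq]; exists (- nmul w x + nmul (nmul w z) x).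
have : nmul (nmul w (z + nmul x w - nmul z (nmul x w))) x = 0.
  by rewrite zq nmul0r nmul0l.
rewrite !nmulDl !nmulNl !nmulDr !nmulNr !nmulDl !nmulNl -!nmulA => <-.
by rewrite opprD opprK (addrC (- nmul w x)) subrK addrA.
Qed.

Lemma jacobson_mulr (x j : A) : j \in J -> nmul j x \in J.
Proof.
move=> Jj; apply/memJ => l r.
have Jw : l *: j + nmul r j \in J by rewrite memvD ?memvZ ?jacobson_mull.
rewrite -nmulZl nmulA -nmulDl; apply: lqr_mulC.
by have := proj1 (memJ _) Jw 0 x; rewrite scale0r add0r.
Qed.

Lemma nmul_blocks_jacobson (x1 x2 y1 y2 j1 j2 : A) :
  nmul x1 y2 = 0 -> nmul y1 x2 = 0 -> j1 \in J -> j2 \in J ->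
  nmul (x1 + y1 + j1) (x2 + y2 + j2) - (nmul x1 x2 + nmul y1 y2) \in J.
Proof.
move=> x1y2 y1x2 Jj1 Jj2.
have -> : nmul (x1 + y1 + j1) (x2 + y2 + j2) =
    nmul (x1 + y1) j2 + nmul j1 (x2 + y2 + j2) + (nmul x1 x2 + nmul y1 y2).
  rewrite nmulDl (nmulDr (x1 + y1)) !nmulDl !nmulDr x1y2 y1x2 addr0 add0r.
  by rewrite -addrA addrC.
by rewrite addrK; apply: memvD; [apply: jacobson_mull | apply: jacobson_mulr].
Qed.

End JacobsonIdeal.

Section ProductEval.
Variables (F : fieldType) (A B : nalg F).

Lemma weval_pair (e : nat -> prod_nalg A B) i w :
  weval e i w = (weval (fun i => (e i).1) i w, weval (fun i => (e i).2) i w).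
Proof.
by rewrite /weval; elim: w (e i) => [|j w IHw] [x y] //=.
Qed.

Lemma peval_pair (e : nat -> prod_nalg A B) (f : ncpoly F) :
  peval e f = (peval (fun i => (e i).1) f, peval (fun i => (e i).2) f).
Proof.
rewrite /peval; elim: f => [|m f IHf]; first by rewrite !big_nil.
by rewrite !big_cons IHf weval_pair.
Qed.

Lemma is_PI_prod_subdirect (P : prod_nalg A B -> Prop) :
  (forall x : A, exists z, P z /\ z.1 = x) ->
  (forall y : B, exists z, P z /\ z.2 = y) ->
  forall f, is_PI (prod_nalg A B) f <-> is_PI_on P f.
Proof.
move=> /ClassicalEpsilon.choice[gA gAP] /ClassicalEpsilon.choice[gB gBP] f.
split=> [PIf e _ | PIPf e]; first exact: PIf.
have /(congr1 fst) := PIPf (fun i => gA (e i).1) (fun i => proj1 (gAP _)).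
have /(congr1 snd) := PIPf (fun i => gB (e i).2) (fun i => proj1 (gBP _)).
rewrite !peval_pair /=.
have -> : (fun i => (gA (e i).1).1) = (fun i => (e i).1).
  by apply: functional_extensionality => i; case: (gAP (e i).1).
have -> : (fun i => (gB (e i).2).2) = (fun i => (e i).2).
  by apply: functional_extensionality => i; case: (gBP (e i).2).
by move=> -> ->.
Qed.

End ProductEval.

Lemma sumv_split_lt {F : fieldType} {V : vectType F} {n : nat} (k : nat)
    (Vs : 'I_n -> {vspace V}) :
  (\sum_(i < n) Vs i)%VS =
  (\sum_(i < n | (i < k)%N) Vs i + \sum_(i < n | (k <= i)%N) Vs i)%VS.
Proof.
rewrite (bigID (fun i : 'I_n => (i < k)%N)) /=; congr (_ + _)%VS.
by apply: eq_bigl => i; rewrite -leqNgt.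
Qed.

Section GluedAlgebra.
Variables (F : fieldType) (A B : nalg F) (q r k : nat).
Variables (As : 'I_q -> {vspace A}) (JA : {vspace A}).
Variables (Bs : 'I_r -> {vspace B}) (JB : {vspace B}).
Variable phi : 'Hom(A, B).

Local Notation UA := (\sum_(i < q | (i < k)%N) As i)%VS.
Local Notation RA := (\sum_(i < q | (k <= i)%N) As i)%VS.
Local Notation UB := (\sum_(j < r | (j < k)%N) Bs j)%VS.
Local Notation RB := (\sum_(i < r | (k <= i)%N) Bs i)%VS.

Definition glued (z : prod_nalg A B) : Prop :=
  exists u a j b j',
    [/\ u \in UA /\ a \in RA, j \in JA, b \in RB, j' \in JB
      & z = (u + a + j, phi u + b + j')].

Lemma glued_fst_onto : (\sum_(i < q) As i + JA)%VS = fullv ->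
  forall x : A, exists z, glued z /\ z.1 = x.
Proof.
move=> Afull x; move: (memvf x); rewrite -Afull (sumv_split_lt k).
move=> /memv_addP[s /memv_addP[u Uu [a Ra ->]] [j Jj ->]].
exists (u + a + j, phi u + 0 + 0); split=> //.
by exists u, a, j, 0, 0; rewrite !mem0v.
Qed.

Lemma glued_snd_onto : (\sum_(i < r) Bs i + JB)%VS = fullv ->
  (phi @: UA)%VS = UB -> forall y : B, exists z, glued z /\ z.2 = y.
Proof.
move=> Bfull phiUA y; move: (memvf y); rewrite -Bfull (sumv_split_lt k).
move=> /memv_addP[s /memv_addP[w + [b Rb ->]] [j Jj ->]].
rewrite -phiUA => /memv_imgP[u Uu ->].
exists (u + 0 + 0, phi u + b + j); split=> //.
by exists u, 0, 0, b, j; rewrite !mem0v.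
Qed.

Hypotheses (subalg_As : forall i, subalg (As i))
           (subalg_Bs : forall i, subalg (Bs i)).
Hypothesis As_orth :
  forall i j, i != j -> forall x y, x \in As i -> y \in As j -> nmul x y = 0.
Hypothesis Bs_orth :
  forall i j, i != j -> forall x y, x \in Bs i -> y \in Bs j -> nmul x y = 0.
Hypotheses (memJA : forall x, x \in JA <-> in_jacobson x)
           (memJB : forall x, x \in JB <-> in_jacobson x).
Hypothesis phiUA : (phi @: UA <= UB)%VS.
Hypothesis phi_mul : {in UA &, forall x y, phi (nmul x y) = nmul (phi x) (phi y)}.

Lemma glued_mul x y : glued x -> glued y -> glued (nmul x y).
Proof.
have lt_ge n (i : 'I_n) : (i < k)%N -> ~~ (k <= i)%N by rewrite -ltnNge.
have ge_lt n (i : 'I_n) : (k <= i)%N -> ~~ (i < k)%N by rewrite -leqNgt.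
have UB_phi u : u \in UA -> phi u \in UB.
  by move=> Uu; apply: (subvP phiUA); rewrite memv_img.
move=> [u [a [j [b [j' [[Uu Ra] Jj Rb Jj' ->]]]]]].
move=> [u2 [a2 [j2 [b2 [j2' [[Uu2 Ra2] Jj2 Rb2 Jj2' ->]]]]]].
exists (nmul u u2), (nmul a a2),
  (nmul (u + a + j) (u2 + a2 + j2) - (nmul u u2 + nmul a a2)),
  (nmul b b2),
  (nmul (phi u + b + j') (phi u2 + b2 + j2') - (nmul (phi u) (phi u2) + nmul b b2)).
split.
- by split; apply: subalg_sumv.
- apply: nmul_blocks_jacobson => //.
    exact: (nmul_sumv_disjoint As_orth (lt_ge q) Uu Ra2).
  exact: (nmul_sumv_disjoint As_orth (ge_lt q) Ra Uu2).
- exact: subalg_sumv.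
- apply: nmul_blocks_jacobson => //.
    exact: (nmul_sumv_disjoint Bs_orth (lt_ge r) (UB_phi _ Uu) Rb2).
  exact: (nmul_sumv_disjoint Bs_orth (ge_lt r) Rb (UB_phi _ Uu2)).
- by rewrite phi_mul // ![_ + (_ - _)]addrC !subrK.
Qed.

End GluedAlgebra.

Theorem lemma2p8 (F : closedFieldType) (hF : [pchar F] =i pred0)
  (A B : nalg F) (q r k : nat) (hkq : (k <= q)%N) (hkr : (k <= r)%N)
  (As : 'I_q -> {vspace A}) (JA : {vspace A})
  (Bs : 'I_r -> {vspace B}) (JB : {vspace B})
  (hA : WM_decomp As JA) (hB : WM_decomp Bs JB)
  (phi : 'Hom(A, B))
  (hphi_img : (phi @: (\sum_(i < q | (i < k)%N) As i))%VS
                = (\sum_(j < r | (j < k)%N) Bs j)%VS)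
  (hphi_inj : {in (\sum_(i < q | (i < k)%N) As i)%VS &, injective phi})
  (hphi_mul : {in (\sum_(i < q | (i < k)%N) As i)%VS &,
                 forall x y, phi (nmul x y) = nmul (phi x) (phi y)}) :
  let inC : prod_nalg A B -> Prop := fun z =>
    exists u a j b j',
      [/\ u \in (\sum_(i < q | (i < k)%N) As i)%VS /\
          a \in (\sum_(i < q | (k <= i)%N) As i)%VS,
          j \in JA,
          b \in (\sum_(i < r | (k <= i)%N) Bs i)%VS,
          j' \in JB
        & z = (u + a + j, phi u + b + j')] in
  (forall x y, inC x -> inC y -> inC (nmul x y)) /\
  (forall f : ncpoly F, is_PI (prod_nalg A B) f <-> is_PI_on inC f).
Proof.
move=> inC; case: hA => simpleA orthA memJA fullA _.
case: hB => simpleB orthB memJB fullB _.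
have subalgA i : subalg (As i) by case: (simpleA i).
have subalgB i : subalg (Bs i) by case: (simpleB i).
split.
  apply: glued_mul subalgA subalgB orthA orthB memJA memJB _ hphi_mul.
  by rewrite hphi_img.
apply: is_PI_prod_subdirect.
  exact: glued_fst_onto fullA.
exact: glued_snd_onto fullB hphi_img.
Qed.
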